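(* Let $f:\mathbb{R}\to\mathbb{C}$ be Lebesgue measurable. Suppose that for every trigonometric polynomial $u$ that is not identically zero, every finite subset $B=\{b_1,\ldots,b_n\}\subset\mathbb{R}_+$, and every $M>0$, the set \[ E_{u,M,B}=\Big\{x\in\mathbb{R}_+: |u(x)f(x)|>M\sum_{i=1}^n|f(x+b_i)|\Big\} \] has positive Lebesgue measure. Then $\mathcal G(f,\mathbb{R}^2)$ is linearly independent. Moreover, if for some $b>0$ this hypothesis is only assumed for finite subsets $B\subset b\mathbb{N}$ (and all nonzero trigonometric polynomials $u$ and all $M>0$), then $\mathcal G(f,\mathbb{R}\times b\mathbb{Z})$ is linearly independent.
   Context: $\mathbb{R}_+=(0,\infty)$. A trigonometric polynomial is a function $u(x)=\sum_{j=1}^m c_je^{2\pi i a_j x}$ with $a_j\in\mathbb{R}$, $c_j\in\mathbb{C}$ (not necessarily periodic). For $a,b\in\mathbb{R}$, $M_aT_bf(x)=e^{2\pi i a x}f(x-b)$, and for $\Lambda\subset\mathbb{R}^2$, $\mathcal G(f,\Lambda)=\{M_aT_bf:(a,b)\in\Lambda\}$. Measurable functions equal a.e. are identified; $\mathcal G(f,\Lambda)$ is linearly independent if for every finite $F\subset\Lambda$ and coefficients $c_{(a,b)}$, $(a,b)\in F$, not all zero, $\sum_{(a,b)\in F}c_{(a,b)}M_aT_bf$ is not zero almost everywhere. *)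

From HB Require Import structures.
From mathcomp Require Import all_boot all_order all_algebra.
From mathcomp Require Import all_classical all_reals all_analysis.
From mathcomp Require Import complex.
Set Implicit Arguments. Unset Strict Implicit. Unset Printing Implicit Defensive.
Import Order.TTheory GRing.Theory Num.Theory.
Local Open Scope ring_scope.
Local Open Scope classical_set_scope.

(* The measurable type of Lebesgue-measurable subsets of R (Caratheodory      *)
(* completion of the Borel sets); its carrier is R itself.                    *)
Definition lebT (R : realType) :=
  caratheodory_type (wlength (R:=R) idfun)^*%mu.

Notation leb := (@completed_lebesgue_measure _).

Definition leb_measurable (R : realType) (f : R -> R[i]) : Prop :=
  measurable_fun [set: lebT R] (fun x : lebT R => complex.Re (f x)) /\
  measurable_fun [set: lebT R] (fun x : lebT R => complex.Im (f x)).

Definition cmod (R : realType) (z : R[i]) : R := Normc.normc z.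

Definition e2pi (R : realType) (t : R) : R[i] :=
  complex.Complex (cos (2 * pi * t)) (sin (2 * pi * t)).

Definition trigpoly (R : realType) (s : seq (R * R[i])) (x : R) : R[i] :=
  \sum_(p <- s) p.2 * e2pi (p.1 * x).

Definition MT (R : realType) (a b : R) (f : R -> R[i]) (x : R) : R[i] :=
  e2pi (a * x) * f (x - b).

Definition gabor_lin_indep (R : realType) (f : R -> R[i]) (Lam : set (R * R)) : Prop :=
  forall (F : seq (R * R)) (c : R * R -> R[i]),
    uniq F -> (forall p, p \in F -> Lam p) ->
    (exists2 p, p \in F & c p != 0) ->
    ~ {ae leb, forall x : lebT R, \sum_(p <- F) c p * MT p.1 p.2 f x = 0}.

Definition Eset (R : realType) (f : R -> R[i]) (u : seq (R * R[i])) (M : R)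
    (B : seq R) : set (lebT R) :=
  [set x : R | 0 < x /\ M * \sum_(bi <- B) cmod (f (x + bi)) < cmod (trigpoly u x * f x)].

Definition hypE (R : realType) (f : R -> R[i]) (Bset : set R) : Prop :=
  forall (u : seq (R * R[i])), (exists x, trigpoly u x != 0) ->
  forall (B : seq R), uniq B -> (forall y, y \in B -> Bset y) ->
  forall M : R, 0 < M -> (0 < leb (Eset f u M B))%E.

From HB Require Import structures.
From mathcomp Require Import all_boot all_order all_algebra.
From mathcomp Require Import all_classical all_reals all_analysis.
From mathcomp Require Import complex.
From mathcomp Require Import ring lra.
Import Order.TTheory GRing.Theory Num.Theory.
Local Open Scope ring_scope.
Local Open Scope classical_set_scope.

(** Suppose [sum_p c_p M_{a_p} T_{b_p} f = 0] a.e. with some [c_p <> 0], and let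
    [beta] be the largest translation parameter [b_p] with [c_p <> 0].  Evaluated
    at [y + beta], the terms with [b_p = beta] give [u(y) f(y)] for a nonzero
    trigonometric polynomial [u] (exponentials with distinct frequencies are
    independent), while the remaining terms are bounded by
    [K * sum_i |f(y + b_i)|], where the [b_i = beta - b_p] are positive gaps.
    Hence the set [E_{u,K+1,B}] lies in the [-beta]-translate of the exceptional
    null set, so it is null, against the hypothesis. *)

Lemma exists_argmax_seq {d} {X : orderType d} {T : eqType} [s : seq T] [P : pred T]
    (g : T -> X) [x0 : T] : x0 \in s -> P x0 ->
  exists2 x, (x \in s) && P x & forall y, y \in s -> P y -> (g y <= g x)%O.
Proof.
move=> x0s Px0; set m := \big[Order.max/g x0]_(y <- s | P y) g y.
have [x xsP gxm] : exists2 x, (x \in s) && P x & g x = m.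
  rewrite /m big_seq_cond; elim/big_ind: _ => [|_ _ [x ? <-] [y ? <-]|x ?].
  - by exists x0; rewrite ?x0s.
  - by rewrite /Order.max; case: ifP => _; [exists y | exists x].
  - by exists x.
by exists x => // y ys Py; rewrite gxm; apply: le_bigmax_seq.
Qed.

Section LebesgueOuterMeasure.
Context {R : realType}.

Lemma wlength_itv_shift (a b t : R) :
  wlength idfun [set y : ocitv_type R | `]a, b]%classic (y + t)] =
  wlength idfun (`]a, b]%classic : set (ocitv_type R)).
Proof.
have -> : [set y : ocitv_type R | `]a, b]%classic (y + t)] = `](a - t), (b - t)]%classic.
  by apply/seteqP; split => y /=; rewrite !in_itv /= => /andP[? ?]; apply/andP; split; lra.
rewrite !wlength_itv /= !lte_fin ltrD2r.
by case: ifP => // _; congr (_%:E); lra.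
Qed.

Lemma leb_shift_le (N : set R) (t : R) :
  (leb ([set y : R | N (y + t)%R] : set (lebT R)) <= leb (N : set (lebT R)))%E.
Proof.
change (mu_ext (wlength idfun) [set y : ocitv_type R | N ((y : R) + t)%R] <=
        mu_ext (wlength idfun) N)%E.
apply: ereal_inf_le_tmp => _ [A [mA NA] <-].
exists (fun k => [set y : ocitv_type R | A k ((y : R) + t)%R]).
  split; last by move=> y /= /NA [k _ Aky]; exists k.
  move=> k; have [[a b] _ <-] := mA k.
  exists (a - t, b - t) => //=; apply/seteqP; split => y /=;
    by rewrite !in_itv /= => /andP[? ?]; apply/andP; split; lra.
have wlA k : wlength idfun [set y : ocitv_type R | A k ((y : R) + t)%R] =
             wlength idfun (A k).
  by have [[a b] _ <-] := mA k; rewrite wlength_itv_shift.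
by under eq_fun do under eq_bigr do rewrite wlA.
Qed.

Lemma le_leb (A B : set R) : A `<=` B ->
  (leb (A : set (lebT R)) <= leb (B : set (lebT R)))%E.
Proof.
move=> AB; change (mu_ext (wlength idfun) (A : set (ocitv_type R)) <=
                   mu_ext (wlength idfun) (B : set (ocitv_type R)))%E.
exact: le_mu_ext.
Qed.

End LebesgueOuterMeasure.

Section ComplexModulus.
Context {R : realType}.

Lemma cmod_ge0 (z : R[i]) : 0 <= cmod z.
Proof. by case: z => a b; exact: sqrtr_ge0. Qed.

Lemma cmodM (z w : R[i]) : cmod (z * w) = cmod z * cmod w.
Proof. exact: Normc.normcM. Qed.

Lemma cmodN (z : R[i]) : cmod (- z) = cmod z.
Proof. exact: normcN. Qed.

Lemma cmod_sum (I : Type) (s : seq I) (P : pred I) (g : I -> R[i]) :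
  cmod (\sum_(i <- s | P i) g i) <= \sum_(i <- s | P i) cmod (g i).
Proof.
apply: (big_rec2 (fun z r => cmod z <= r)) => [|i z r _ IH].
  by rewrite /cmod Normc.normc0.
exact: le_trans (le_normcD _ _) (lerD _ IH).
Qed.

End ComplexModulus.

Section Exponentials.
Context {R : realType}.

Lemma e2piD (x y : R) : e2pi (x + y) = e2pi x * e2pi y.
Proof. by rewrite /e2pi mulrDr cosD sinD; congr complex.Complex; ring. Qed.

Lemma e2pi0 : e2pi (0 : R) = 1.
Proof. by rewrite /e2pi mulr0 cos0 sin0. Qed.

Lemma e2pi_neq0 (x : R) : e2pi x != 0.
Proof.
apply/eqP => ex0; have /eqP := e2piD x (- x).
by rewrite subrr e2pi0 ex0 mul0r oner_eq0.
Qed.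

Lemma cmod_e2pi (x : R) : cmod (e2pi x) = 1.
Proof. by rewrite /cmod /e2pi /= cos2Dsin2 sqrtr1. Qed.

Lemma e2pi_neq1 (x : R) : 0 < `|x| < 2^-1 -> e2pi x != 1.
Proof.
move=> /andP[x_gt0 x_lt].
suff : sin (2 * pi * x) != 0 by apply: contra_neq => /(congr1 (@complex.Im R)).
have pi_pos := pi_gt0 R.
wlog x_pos : x x_gt0 x_lt / 0 < x.
  move=> pos_case; have [xn|xp] := ltP x 0; last first.
    by apply: pos_case => //; rewrite lt_neqAle xp andbT eq_sym -normr_eq0 gt_eqF.
  by rewrite -[x]opprK mulrN sinN oppr_eq0; apply: pos_case; rewrite ?normrN ?oppr_gt0.
have : 0 < sin (2 * pi * x).
  by apply: sin_gt0_pi; move: x_lt; rewrite gtr0_norm // => ?; apply/andP; split; nra.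
by move=> /gt_eqF ->.
Qed.

End Exponentials.

Section TrigonometricPolynomials.
Context {R : realType}.

Lemma exists_e2pi_separating (a : R) (s : seq R) : a \notin s ->
  exists t : R, forall a', a' \in s -> e2pi (a' * t) != e2pi (a * t).
Proof.
move=> a_notin_s; set K := 1 + \sum_(a' <- s) `|a' - a|.
have K_ge1 : 1 <= K by rewrite lerDl sumr_ge0.
(* [t = 1/(4K)] puts every [(a' - a) t] in [0 < |.| <= 1/4]. *)
exists (4 * K)^-1 => a' a's; set t := (4 * K)^-1.
have t_gt0 : 0 < t by rewrite invr_gt0; lra.
have Kt : K * t = 4^-1 by rewrite /t invfM mulrCA mulfV ?mulr1 //; lra.
have d_neq0 : a' - a != 0 by rewrite subr_eq0; apply: contraNneq a_notin_s => <-.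
have d_le : `|a' - a| <= K - 1 by rewrite /K (addrC 1) addrK (big_rem a') //= lerDl sumr_ge0.
have : e2pi ((a' - a) * t) != 1.
  apply: e2pi_neq1; rewrite normrM (gtr0_norm t_gt0) mulr_gt0 ?normr_gt0 //=.
  by apply: (@le_lt_trans _ _ (K * t)); rewrite ?Kt; nra.
by apply: contra_neq => e_eq; rewrite mulrBl e2piD e_eq -e2piD subrr e2pi0.
Qed.

Lemma trigpoly_diff (s : seq (R * R[i])) (a t x : R) :
  trigpoly [seq (p.1, p.2 * (e2pi (p.1 * t) - e2pi (a * t))) | p <- s] x =
  trigpoly s (x + t) - e2pi (a * t) * trigpoly s x.
Proof.
rewrite /trigpoly big_map mulr_sumr -sumrB; apply: eq_bigr => p _ /=.
by rewrite (mulrDr p.1) e2piD; ring.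
Qed.

(* The induction step applies [trigpoly_diff] with a [t] separating the first
   frequency [a] from the others: this kills [a] and keeps the other
   coefficients nonzero. *)
Lemma trigpoly_coef_eq0 (s : seq (R * R[i])) : uniq (map fst s) ->
  (forall x, trigpoly s x = 0) -> forall p, p \in s -> p.2 = 0.
Proof.
move Hn : (size s) => n; elim: n s Hn => [|n IH] [|[a c] s] //= [size_s].
move=> /andP[a_notin uniq_s] s_eq0.
have tail_eq y : trigpoly s y = - (c * e2pi (a * y)).
  by apply/eqP; rewrite -addr_eq0 addrC; have := s_eq0 y; rewrite /trigpoly big_cons => ->.
have coef_s_eq0 q : q \in s -> q.2 = 0.
  have [t t_sep] := exists_e2pi_separating _ _ a_notin.
  set s' := [seq (p.1, p.2 * (e2pi (p.1 * t) - e2pi (a * t))) | p <- s].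
  have s'_eq0 x : trigpoly s' x = 0.
    by rewrite trigpoly_diff !tail_eq mulrDr e2piD; ring.
  have uniq_s' : uniq (map fst s') by rewrite -map_comp.
  move=> qs; have /eqP := IH s' (etrans (size_map _ _) size_s) uniq_s' s'_eq0 _ (map_f _ qs).
  by rewrite mulf_eq0 subr_eq0 (negbTE (t_sep _ (map_f _ qs))) orbF => /eqP.
have c_eq0 : c = 0.
  have := s_eq0 0; rewrite /trigpoly big_cons big1_seq => [|q /andP[_ qs]].
    by rewrite mulr0 e2pi0 mulr1 addr0.
  by rewrite coef_s_eq0 ?mul0r.
by move=> p; rewrite inE => /predU1P[-> //|]; exact: coef_s_eq0.
Qed.

End TrigonometricPolynomials.

Section LeadingRow.
Context {R : realType}.
Variables (f : R -> R[i]) (F : seq (R * R)) (c : R * R -> R[i]).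
Variable beta : R.

Definition leading_row : seq (R * R[i]) :=
  [seq (p.1, c p * e2pi (p.1 * beta)) | p <- F & p.2 == beta].

Definition leading_gaps : seq R :=
  undup [seq beta - p.2 | p <- F & (c p != 0) && (p.2 != beta)].

Let K := \sum_(p <- F) cmod (c p).

Lemma gabor_sum_leading_row (y : R) :
  \sum_(p <- F | p.2 == beta) c p * MT p.1 p.2 f (y + beta) =
  trigpoly leading_row y * f y.
Proof.
rewrite /trigpoly /leading_row big_map big_filter mulr_suml.
apply: eq_bigr => p /eqP p2; rewrite /MT /= p2 addrK (mulrDr p.1) e2piD; ring.
Qed.

Lemma gabor_sum_other_rows_le (y : R) :
  cmod (\sum_(p <- F | p.2 != beta) c p * MT p.1 p.2 f (y + beta)) <=
  K * \sum_(b <- leading_gaps) cmod (f (y + b)).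
Proof.
set S := \sum_(b <- leading_gaps) _.
have S_ge0 : 0 <= S by apply: sumr_ge0 => b _; exact: cmod_ge0.
apply: le_trans; first exact: cmod_sum.
apply: (@le_trans _ _ (\sum_(p <- F | p.2 != beta) cmod (c p) * S)).
  rewrite big_seq_cond [leRHS]big_seq_cond; apply: ler_sum => p /andP[pF p2].
  rewrite /MT !cmodM cmod_e2pi mul1r.
  have [->|cp] := eqVneq (c p) 0; first by rewrite /cmod Normc.normc0 !mul0r.
  rewrite ler_wpM2l ?cmod_ge0 // -addrA /S (big_rem (beta - p.2)) /=.
    by rewrite lerDl sumr_ge0 // => b _; exact: cmod_ge0.
  by rewrite mem_undup; apply: map_f; rewrite mem_filter cp p2.
rewrite -mulr_suml ler_wpM2r // /K [leRHS](bigID (fun p => p.2 == beta)) /=.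
by rewrite lerDr sumr_ge0 // => p _; exact: cmod_ge0.
Qed.

Lemma gabor_sum_neq0_Eset (y : R) :
  Eset f leading_row (K + 1) leading_gaps y ->
  \sum_(p <- F) c p * MT p.1 p.2 f (y + beta) != 0.
Proof.
move=> [_ E_y]; rewrite (bigID (fun p => p.2 == beta)) /= gabor_sum_leading_row.
rewrite addr_eq0; apply/eqP => top_eq; move: E_y.
rewrite top_eq cmodN mulrDl mul1r.
set S := \sum_(b <- leading_gaps) _.
have S_ge0 : 0 <= S by apply: sumr_ge0 => b _; exact: cmod_ge0.
by have := gabor_sum_other_rows_le y; rewrite -/S; lra.
Qed.

Lemma leading_row_neq0 (q : R * R) : uniq F -> q \in F -> q.2 = beta -> c q != 0 ->
  exists x, trigpoly leading_row x != 0.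
Proof.
move=> uniq_F qF q2 cq; apply: contrapT => /forallNP row_eq0.
have uniq_freq : uniq (map fst leading_row).
  rewrite -map_comp map_inj_in_uniq ?filter_uniq // => -[a1 b1] [a2 b2].
  by rewrite !mem_filter /= => /andP[/eqP -> _] /andP[/eqP -> _] ->.
have row0 x : trigpoly leading_row x = 0 by apply/eqP/negPn/negP/row_eq0.
have q_row : q \in [seq p <- F | p.2 == beta] by rewrite mem_filter q2 eqxx.
have /eqP := trigpoly_coef_eq0 _ uniq_freq row0 _
  (map_f (fun p => (p.1, c p * e2pi (p.1 * beta))) q_row).
by rewrite mulf_eq0 (negbTE cq) (negbTE (e2pi_neq0 _)).
Qed.

End LeadingRow.

Arguments gabor_sum_neq0_Eset {R f F c beta y}.
Arguments leading_row_neq0 {R F c beta q}.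

Lemma gabor_lin_indep_of_hypE (R : realType) (f : R -> R[i]) (Lam : set (R * R))
    (Bset : set R) :
  (forall p q, Lam p -> Lam q -> q.2 < p.2 -> Bset (p.2 - q.2)) ->
  hypE f Bset -> gabor_lin_indep f Lam.
Proof.
move=> Lam_gaps hE F c uniq_F F_Lam [p0 p0F cp0] [N [_ N0 sN]].
have [q /andP[qF cq] q_max] := exists_argmax_seq (P := fun p => c p != 0) snd p0F cp0.
set beta := q.2; set M := \sum_(p <- F) cmod (c p) + 1.
have M_gt0 : 0 < M by rewrite ltr_wpDl ?sumr_ge0 // => p _; exact: cmod_ge0.
have gaps_Bset b : b \in leading_gaps F c beta -> Bset b.
  rewrite mem_undup => /mapP[p]; rewrite mem_filter => /andP[/andP[cp p_beta] pF] ->.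
  by apply: Lam_gaps; [exact: F_Lam | exact: F_Lam | rewrite lt_neqAle p_beta q_max].
have := hE _ (leading_row_neq0 uniq_F qF (erefl beta) cq) _ (undup_uniq _) gaps_Bset M M_gt0.
apply/negP; rewrite -leNgt -N0; apply: le_trans (leb_shift_le N beta).
apply: le_leb => y E_y; apply: contrapT => N_y; apply: (negP (gabor_sum_neq0_Eset E_y)).
by apply/eqP; apply: contrapT => sum_neq0; exact/N_y/sN.
Qed.

Theorem theorem3p1 (R : realType) (f : R -> R[i]) :
  leb_measurable f ->
  (hypE f [set x : R | 0 < x] -> gabor_lin_indep f [set: R * R]) /\
  (forall b : R, 0 < b ->
     hypE f [set y : R | exists2 k : nat, (0 < k)%N & y = b * k%:R] ->
     gabor_lin_indep f [set p : R * R | exists k : int, p.2 = b * k%:~R]).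
Proof.
move=> _; split.
  by apply: gabor_lin_indep_of_hypE => p q _ _; rewrite /= subr_gt0.
move=> b b_gt0; apply: gabor_lin_indep_of_hypE => p q [k1 ->] [k2 ->].
rewrite ltr_pM2l // ltr_int => k21 /=; exists `|k1 - k2|%N.
  by rewrite absz_gt0 subr_eq0 gt_eqF.
by rewrite natr_absz gtr0_norm ?subr_gt0 // intrB mulrBr.
Qed.
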